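(* Let $I_1,\dots,I_n$ be i.i.d. Bernoulli random variables with $\Pr[I_i=1]=p=1-q$, $0<q<1$, let $I_{n+1}=\prod_{j=1}^n(1-I_j)$, and let $P_i=I_i/\sum_{j=1}^{n+1}I_j$ for $i=1,\dots,n+1$. Let $\pi_1,\dots,\pi_n\ge0$ with $\pi_i>0$ for some $i$, and let $W_i=\big(\sum_{j=1}^{n}\pi_j\big)P_i+\pi_iP_{n+1}$ for $i=1,\dots,n$ (homogeneous tontine with passive administrator). Then $E[W_i]=\pi_i$ for all $i=1,\dots,n$ if and only if $\pi_1=\pi_2=\dots=\pi_n$. *)

(* finite probability space {0,1}^n with product Bernoulli law. *)
From HB Require Import structures.
From mathcomp Require Import all_boot all_order all_algebra.
Set Implicit Arguments. Unset Strict Implicit. Unset Printing Implicit Defensive.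
Import Order.TTheory GRing.Theory Num.Theory.
Local Open Scope ring_scope.

Definition outcome (n : nat) := {ffun 'I_n -> bool}.

Definition bern_prob {R : realFieldType} (n : nat) (q : R) (w : outcome n) : R :=
  \prod_(j < n) (if w j then 1 - q else q).

Definition Ind {R : realFieldType} (n : nat) (i : 'I_n) (w : outcome n) : R :=
  (w i)%:R.

Definition Ilast {R : realFieldType} (n : nat) (w : outcome n) : R :=
  \prod_(j < n) (1 - Ind j w).

Definition Itot {R : realFieldType} (n : nat) (w : outcome n) : R :=
  \sum_(j < n) Ind j w + Ilast w.

Definition Pshare {R : realFieldType} (n : nat) (i : 'I_n) (w : outcome n) : R :=
  Ind i w / Itot w.
Definition Plast {R : realFieldType} (n : nat) (w : outcome n) : R :=
  Ilast w / Itot w.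

Definition Wpay {R : realFieldType} (n : nat) (pi : 'I_n -> R) (i : 'I_n)
  (w : outcome n) : R :=
  (\sum_(j < n) pi j) * Pshare i w + pi i * Plast w.

Definition Ebern {R : realFieldType} (n : nat) (q : R) (X : outcome n -> R) : R :=
  \sum_(w : outcome n) bern_prob q w * X w.

(** Relabelling the members is a measure-preserving bijection of the outcome
    space that fixes the total [sum_j I_j + I_(n+1)], so all the [E[P_i]],
    [i <= n], coincide.  Since the shares sum to one and [E[P_(n+1)] = q^n],
    each equals [(1 - q^n)/n], whence
    [E[W_i] = (sum_j pi_j)(1 - q^n)/n + pi_i q^n].  As [q^n <> 1], this equals
    [pi_i] exactly when [pi_i] is the mean of the [pi_j]; and every [pi_i]
    equals the mean iff they are all equal. *)
From mathcomp Require Import all_boot all_order all_algebra all_fingroup.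
Import Order.TTheory GRing.Theory Num.Theory.
Local Open Scope ring_scope.

Lemma mulrnK (F : numFieldType) (m : nat) (x : F) : (0 < m)%N -> x *+ m / m%:R = x.
Proof. by move=> m_gt0; rewrite -(mulr_natr x) mulfK // pnatr_eq0 -lt0n. Qed.

Section BernoulliShares.
Variables (R : realFieldType) (n : nat) (q : R).

Lemma EbernD (X Y : outcome n -> R) :
  Ebern q (fun w => X w + Y w) = Ebern q X + Ebern q Y.
Proof. by rewrite /Ebern -big_split; apply: eq_bigr => w _; rewrite mulrDr. Qed.

Lemma EbernZ (a : R) (X : outcome n -> R) :
  Ebern q (fun w => a * X w) = a * Ebern q X.
Proof. by rewrite /Ebern mulr_sumr; apply: eq_bigr => w _; rewrite mulrCA. Qed.

Lemma Ebern_sum (X : 'I_n -> outcome n -> R) :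
  Ebern q (fun w => \sum_(i < n) X i w) = \sum_(i < n) Ebern q (X i).
Proof.
rewrite /Ebern exchange_big /=; apply: eq_bigr => w _; exact: mulr_sumr.
Qed.

Lemma Ebern_cst (c : R) : Ebern q (fun _ : outcome n => c) = c.
Proof.
rewrite /Ebern -mulr_suml.
have := bigA_distr_bigA (fun (j : 'I_n) (b : bool) => if b then 1 - q else q).
rewrite /bern_prob => <-.
by rewrite big1 ?mul1r // => j _; rewrite big_bool /= subrK.
Qed.

Definition perm_outcome (s : {perm 'I_n}) (w : outcome n) : outcome n :=
  [ffun k => w (s k)].

Lemma perm_outcome_inj (s : {perm 'I_n}) : injective (perm_outcome s).
Proof.
move=> w1 w2 /ffunP eqw; apply/ffunP => k.
by have := eqw ((s^-1)%g k); rewrite !ffunE permKV.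
Qed.

Lemma bern_prob_perm (s : {perm 'I_n}) (w : outcome n) :
  bern_prob q (perm_outcome s w) = bern_prob q w.
Proof.
rewrite /bern_prob (reindex_inj (@perm_inj _ (s^-1)%g)) /=.
by apply: eq_bigr => k _; rewrite ffunE permKV.
Qed.

Lemma Ebern_perm (s : {perm 'I_n}) (X : outcome n -> R) :
  Ebern q (X \o perm_outcome s) = Ebern q X.
Proof.
rewrite /Ebern [RHS](reindex_inj (perm_outcome_inj s)) /=.
by apply: eq_bigr => w _; rewrite bern_prob_perm.
Qed.

Lemma Itot_perm (s : {perm 'I_n}) (w : outcome n) :
  Itot (R:=R) (perm_outcome s w) = Itot w.
Proof.
rewrite /Itot /Ilast (reindex_inj (@perm_inj _ (s^-1)%g)) /=.
rewrite [in X in _ + X](reindex_inj (@perm_inj _ (s^-1)%g)) /=.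
by congr (_ + _); apply: eq_bigr => k _; rewrite /Ind ffunE permKV.
Qed.

Lemma Ebern_Pshare_exchangeable (i j : 'I_n) :
  Ebern q (Pshare (R:=R) i) = Ebern q (Pshare j).
Proof.
rewrite -(Ebern_perm (tperm i j)); apply: eq_bigr => w _.
by rewrite /= /Pshare Itot_perm /Ind ffunE tpermL.
Qed.

Definition outcome0 : outcome n := [ffun=> false].

Lemma outcome_neq0 {w : outcome n} : w != outcome0 -> exists k, w k.
Proof.
move=> ne; apply/existsP; apply: contraNT ne; rewrite negb_exists => /forallP wF.
by apply/eqP/ffunP => k; rewrite ffunE (negbTE (wF k)).
Qed.

Lemma Plast_indicator (w : outcome n) : Plast (R:=R) w = (w == outcome0)%:R.
Proof.
have [->|ne] := eqVneq w outcome0.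
  have Ilast0 : Ilast (R:=R) outcome0 = 1.
    by rewrite /Ilast big1 // => k _; rewrite /Ind ffunE subr0.
  rewrite /Plast /Itot Ilast0 big1 ?add0r ?divr1 // => k _.
  by rewrite /Ind ffunE.
have [k wk] := outcome_neq0 ne.
by rewrite /Plast /Ilast (bigD1 k) //= /Ind wk subrr !mul0r.
Qed.

Lemma Ebern_Plast : Ebern q (Plast (R:=R) (n:=n)) = q ^+ n.
Proof.
rewrite /Ebern (bigD1 outcome0) //= big1 => [|w ne]; last first.
  by rewrite Plast_indicator (negbTE ne) mulr0.
rewrite Plast_indicator eqxx mulr1 addr0 /bern_prob.
by rewrite (eq_bigr (fun=> q)) ?prodr_const ?card_ord // => k _; rewrite ffunE.
Qed.

Lemma Itot_gt0 (w : outcome n) : 0 < Itot (R:=R) w.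
Proof.
have [->|ne] := eqVneq w outcome0.
  by rewrite /Itot /Ilast !big1 ?add0r ?ltr01 // => k _; rewrite /Ind ffunE ?subr0.
have [k wk] := outcome_neq0 ne.
have Ilast_ge0 : 0 <= Ilast (R:=R) w.
  by apply: prodr_ge0 => l _; rewrite /Ind; case: (w l); rewrite ?subrr ?subr0.
rewrite /Itot (bigD1 k) //= {1}/Ind wk -addrA ltr_pwDl //.
by rewrite addr_ge0 // sumr_ge0 // => l _; rewrite /Ind ler0n.
Qed.

Lemma shares_sum1 (w : outcome n) :
  \sum_(i < n) Pshare (R:=R) i w + Plast w = 1.
Proof.
rewrite /Pshare /Plast -mulr_suml -mulrDl divff //.
by rewrite gt_eqF // Itot_gt0.
Qed.

Lemma Ebern_Pshare (i : 'I_n) :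
  Ebern q (Pshare (R:=R) i) = (1 - q ^+ n) / n%:R.
Proof.
have n_gt0 : (0 < n)%N by case: n i => [[]|].
have tot : Ebern q (Pshare (R:=R) i) *+ n + q ^+ n = 1.
  have -> : Ebern q (Pshare (R:=R) i) *+ n = \sum_(j < n) Ebern q (Pshare j).
    rewrite (eq_bigr (fun=> Ebern q (Pshare (R:=R) i))) ?sumr_const ?card_ord //.
    by move=> j _; apply: Ebern_Pshare_exchangeable.
  rewrite -Ebern_Plast -Ebern_sum -EbernD -[RHS](Ebern_cst 1).
  by apply: eq_bigr => w _; rewrite shares_sum1.
have -> : 1 - q ^+ n = Ebern q (Pshare (R:=R) i) *+ n by rewrite -tot addrK.
by rewrite mulrnK.
Qed.

Lemma Ebern_Wpay (pi : 'I_n -> R) (i : 'I_n) :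
  Ebern q (Wpay pi i) =
  (\sum_(j < n) pi j) * ((1 - q ^+ n) / n%:R) + pi i * q ^+ n.
Proof. by rewrite /Wpay EbernD !EbernZ Ebern_Pshare Ebern_Plast. Qed.

Lemma Ebern_Wpay_fair (pi : 'I_n -> R) (i : 'I_n) :
  0 <= q -> q < 1 ->
  (Ebern q (Wpay pi i) = pi i) <-> (pi i = (\sum_(j < n) pi j) / n%:R).
Proof.
move=> q_ge0 q_lt1.
have n_gt0 : (0 < n)%N by case: n pi i => [? []|].
have qn_neq1 : 1 - q ^+ n != 0 by rewrite subr_eq0 gt_eqF // exprn_ilt1 // -lt0n.
rewrite Ebern_Wpay mulrCA [(1 - _) * _]mulrC.
split=> [fair_i|->]; last by rewrite -mulrDr subrK mulr1.
apply: (mulIf qn_neq1); rewrite mulrBr mulr1 -{1}fair_i.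
by rewrite addrK.
Qed.

End BernoulliShares.

Theorem mainTheorem13 (R : realFieldType) (n : nat) (q : R) (pi : 'I_n -> R) :
  0 < q -> q < 1 ->
  (forall i, 0 <= pi i) -> (exists i, 0 < pi i) ->
  ((forall i, Ebern q (Wpay pi i) = pi i) <-> (forall i j, pi i = pi j)).
Proof.
move=> q_gt0 q_lt1 _ [i0 _].
have n_gt0 : (0 < n)%N by case: n pi i0 => [? []|].
have fair i := @Ebern_Wpay_fair R n q pi i (ltW q_gt0) q_lt1.
split=> [Efair i j | pi_const i].
  by rewrite ((fair i).1 (Efair i)) ((fair j).1 (Efair j)).
apply/(fair i).
rewrite (eq_bigr (fun=> pi i)) => [|j _]; last exact: pi_const.
by rewrite sumr_const card_ord mulrnK.
Qed.
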